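(* Let $\Omega$ be a finite ground set, let $(\Omega,\mathcal{I})$ be a matroid, let $f:2^\Omega\to\mathbb{R}$ be a normalized, monotone, submodular set function with $f(\{x\})>0$ for every $x\in\Omega$, and let $\nu$ be the curvature of $f$. Fix an integer $\alpha\ge 0$. Let $A^{\mathrm{sol}}$ be any output of the Myopic Maximization algorithm below (with arbitrary tie-breaking). Then $A^{\mathrm{sol}}\in\mathcal{I}$, and \[ \min_{B\subseteq A^{\mathrm{sol}},\ |B|\le\alpha} f(A^{\mathrm{sol}}\setminus B)\;\ge\;(1-\nu)\,\max_{A\in\mathcal{I}}\ \min_{B\subseteq A,\ |B|\le\alpha} f(A\setminus B). \]
   Context: A set function $f$ is normalized if $f(\emptyset)=0$, monotone if $f(X)\le f(Y)$ whenever $X\subseteq Y$, and submodular if $f(X\cup\{x\})-f(X)\ge f(Y\cup\{x\})-f(Y)$ for all $X\subseteq Y\subseteq\Omega$ and $x\in\Omega\setminus Y$. Write $f(x)$ for $f(\{x\})$. The curvature of $f$ is \[ \nu = 1-\min_{x\in\Omega}\frac{f(\Omega)-f(\Omega\setminus\{x\})}{f(x)}. \] The resilient submodular maximization problem is $\max_{A\in\mathcal{I}}\min_{B\subseteq A,\,|B|\le\alpha} f(A\setminus B)$. $\mathrm{rank}(\mathcal{I})$ denotes the common cardinality of the maximal independent sets (bases) of the matroid. Myopic Maximization algorithm: start with $A^{\mathrm{sol}}=\emptyset$; while $|A^{\mathrm{sol}}|<\mathrm{rank}(\mathcal{I})$, choose $a\in\arg\max\{ f(\{a\}) : a\in\Omega\setminus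 A^{\mathrm{sol}},\ A^{\mathrm{sol}}\cup\{a\}\in\mathcal{I}\}$ and set $A^{\mathrm{sol}}\gets A^{\mathrm{sol}}\cup\{a\}$; return $A^{\mathrm{sol}}$. *)

From mathcomp Require Import all_boot all_order all_algebra.
Set Implicit Arguments. Unset Strict Implicit. Unset Printing Implicit Defensive.
Import Order.TTheory GRing.Theory Num.Theory.
Local Open Scope ring_scope.

Section Defs.
Variables (T : finType) (R : realFieldType).

Definition is_matroid (I : {set T} -> bool) : Prop :=
  [/\ I set0,
      (forall A B : {set T}, B \subset A -> I A -> I B) &
      (forall A B : {set T}, I A -> I B -> (#|A| < #|B|)%N ->
         exists2 x, x \in B :\: A & I (x |: A))].

Definition mrank (I : {set T} -> bool) : nat := (\max_(A | I A) #|A|)%N.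

Definition normalized (f : {set T} -> R) : Prop := f set0 = 0.
Definition monotone (f : {set T} -> R) : Prop :=
  forall X Y : {set T}, X \subset Y -> f X <= f Y.
Definition submodular (f : {set T} -> R) : Prop :=
  forall (X Y : {set T}) (x : T), X \subset Y -> x \notin Y ->
    f (x |: X) - f X >= f (x |: Y) - f Y.

(* The neutral element 1 of the min is irrelevant whenever T is nonempty,
   since each ratio is <= 1 for normalized submodular f with f(x) > 0. *)
Definition curvature (f : {set T} -> R) : R :=
  1 - \big[Num.min/1]_(x : T) ((f setT - f (setT :\ x)) / f [set x]).

(* min_{B subset A, |B| <= alpha} f(A \ B).  B = set0 is always in range,
   so the neutral element f A is harmless. *)
Definition resil_value (f : {set T} -> R) (alpha : nat) (A : {set T}) : R :=
  \big[Num.min/f A]_(B : {set T} | (B \subset A) && (#|B| <= alpha)%N) f (A :\: B).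

(* max_{A in I} resil_value A.  set0 is independent, so the neutral element
   resil_value set0 is harmless. *)
Definition resil_opt (I : {set T} -> bool) (f : {set T} -> R) (alpha : nat) : R :=
  \big[Num.max/resil_value f alpha set0]_(A : {set T} | I A) resil_value f alpha A.

(* States reachable by the Myopic Maximization loop, with arbitrary tie-breaking. *)
Inductive myopic_reach (I : {set T} -> bool) (f : {set T} -> R) : {set T} -> Prop :=
| myopic_start : myopic_reach I f set0
| myopic_step (A : {set T}) (a : T) :
    myopic_reach I f A ->
    (#|A| < mrank I)%N ->
    a \notin A -> I (a |: A) ->
    (forall b : T, b \notin A -> I (b |: A) -> f [set b] <= f [set a]) ->
    myopic_reach I f (a |: A).

Definition myopic_output (I : {set T} -> bool) (f : {set T} -> R) (A : {set T}) : Prop :=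
  myopic_reach I f A /\ ~~ (#|A| < mrank I)%N.

End Defs.

(* Weigh each element x by w x = f {x}.
   - A threshold-counting argument on the matroid shows that the myopic output
     Asol dominates every independent set A: for every t, Asol has at least as
     many elements of weight >= t as A (dominates, myopic_output_dominates).
   - Dominance lets any removal B from Asol be matched by a removal B' from A
     with |B'| <= |B| and sum_(A \ B') w <= sum_(Asol \ B) w
     (dominates_removal).
   - Submodularity gives f S <= sum_(S) w, and the curvature gives
     (1 - nu) * sum_(S) w <= f S (subadditive_singletons,
     curvature_lower_bound).
   Chaining these bounds compares the resilient values of A and Asol
   (myopic_resilience_ratio); taking A optimal yields the theorem. *)

From mathcomp Require Import all_boot all_order all_algebra.
Set Implicit Arguments. Unset Strict Implicit. Unset Printing Implicit Defensive.
Import Order.TTheory GRing.Theory Num.Theory.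
Local Open Scope ring_scope.

Section SetInduction.
Variable T : finType.

Lemma card_ind (P : {set T} -> Prop) :
  (forall S : {set T}, (forall S' : {set T}, (#|S'| < #|S|)%N -> P S') -> P S) ->
  forall S, P S.
Proof.
move=> IH S; elim: {S}#|S|.+1 {-2}S (ltnSn #|S|) => // n IHn S ltSn.
by apply: IH => S' ltS'; apply: IHn; apply: leq_trans ltS' _.
Qed.

Lemma cardsD1_lt (S : {set T}) a : a \in S -> (#|S :\ a| < #|S|)%N.
Proof. by move=> aS; rewrite (cardsD1 a S) aS. Qed.

Lemma setD1_ind (P : {set T} -> Prop) :
  P set0 -> (forall (S : {set T}) a, a \in S -> P (S :\ a) -> P S) -> forall S, P S.
Proof.
move=> P0 PD1; elim/card_ind => S IH.
have [->//|/set0Pn[a aS]] := eqVneq S set0.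
by apply: (PD1 _ a aS); apply: IH; apply: cardsD1_lt.
Qed.

End SetInduction.

Section WeightDominance.
Variables (T : finType) (R : realFieldType) (w : T -> R).

Definition superlevel (t : R) (A : {set T}) : {set T} := [set x in A | t <= w x].

Definition dominates (A S : {set T}) : Prop :=
  forall t, (#|superlevel t A| <= #|superlevel t S|)%N.

Lemma superlevel_sub t A : superlevel t A \subset A.
Proof. by apply/subsetP => z; rewrite inE => /andP[]. Qed.

Lemma dominatesD1 (A S : {set T}) x y :
  dominates A S -> x \in A -> (forall z, z \in A -> w z <= w x) ->
  y \in S -> w x <= w y -> dominates (A :\ x) (S :\ y).
Proof.
move=> dom xA xmax yS wxy t; have [tx|xt] := leP t (w x).
  have e B b : superlevel t (B :\ b) = superlevel t B :\ b.
    by apply/setP => z; rewrite !inE andbA.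
  move: (dom t); rewrite !e (cardsD1 x (superlevel t A)) (cardsD1 y (superlevel t S)).
  by rewrite !inE xA yS tx (le_trans tx wxy).
suff -> : superlevel t (A :\ x) = set0 by rewrite cards0.
apply/setP => z; rewrite !inE; apply/negP => /andP[/andP[_ zA] tz].
by have := lt_le_trans xt (le_trans tz (xmax z zA)); rewrite ltxx.
Qed.

Lemma dominates_removal (A S B : {set T}) :
  (forall x, 0 <= w x) -> dominates A S ->
  exists2 B' : {set T}, B' \subset A &
    (#|B'| <= #|B|)%N /\ \sum_(x in A :\: B') w x <= \sum_(x in S :\: B) w x.
Proof.
move=> w0; elim/card_ind: A S B => A IH S B dom.
have [-> | A0] := eqVneq A set0.
  exists set0; rewrite ?sub0set // cards0 set0D big_set0.
  by split => //; apply: sumr_ge0.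
have [x0 x0A] := set0Pn _ A0.
have [x xA xmax] : exists2 x, x \in A & forall z, z \in A -> w z <= w x.
  by case: (arg_maxP w x0A) => x; exists x.
have : (0 < #|superlevel (w x) S|)%N.
  apply: leq_trans (dom (w x)); rewrite card_gt0.
  by apply/set0Pn; exists x; rewrite inE xA lexx.
rewrite card_gt0 => /set0Pn [y]; rewrite inE => /andP[yS wxy].
have domD1 := dominatesD1 dom xA xmax yS wxy.
have [B1 sB1 [cB1 sum1]] := IH _ (cardsD1_lt xA) _ (B :\ y) domD1.
have sB1A : B1 \subset A := subset_trans sB1 (subD1set A x).
have eS : (S :\ y) :\: (B :\ y) = (S :\: B) :\ y.
  by apply/setP => z; rewrite !inE; case: eqVneq.
have eA : (A :\ x) :\: B1 = (A :\: B1) :\ x.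
  by apply/setP => z; rewrite !inE andbCA.
(* If y is removed from S, remove x from A as well; otherwise x is kept and
   its weight is paid for by the weight of y. *)
have [yB | yNB] := boolP (y \in B).
  exists (x |: B1); first by rewrite subUset sub1set xA.
  split; first by rewrite cardsU1 (cardsD1 y B) yB leq_add ?leq_b1.
  have -> : A :\: (x |: B1) = (A :\ x) :\: B1.
    by apply/setP => z; rewrite !inE negb_or andbAC andbC.
  have -> : S :\: B = (S :\ y) :\: (B :\ y).
    by rewrite eS; apply/setP => z; rewrite !inE; case: eqVneq => // ->; rewrite yB.
  exact: sum1.
exists B1 => //; split; first by rewrite (leq_trans cB1) // (cardsD1 y B) (negbTE yNB).
have xA' : x \in A :\: B1.
  by rewrite inE xA andbT; apply/negP => /(subsetP sB1); rewrite !inE eqxx.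
have yS' : y \in S :\: B by rewrite inE yS yNB.
rewrite (big_setD1 x xA') (big_setD1 y yS') lerD //.
by rewrite -eA -eS.
Qed.

End WeightDominance.

Section MyopicGreedy.
Variables (T : finType) (R : realFieldType) (I : {set T} -> bool) (f : {set T} -> R).
Hypothesis matroidI : is_matroid I.

Local Notation w := (fun x : T => f [set x]).

Lemma indep_subset (A B : {set T}) : B \subset A -> I A -> I B.
Proof. by case: matroidI => _ down _; apply: down. Qed.

Lemma indep_exchange (A B : {set T}) : I A -> I B -> (#|A| < #|B|)%N ->
  exists2 x, x \in B :\: A & I (x |: A).
Proof. by case: matroidI => _ _; apply. Qed.

Lemma indep_card_le_rank (A : {set T}) : I A -> (#|A| <= mrank I)%N.
Proof. by move=> IA; apply: (@leq_bigmax_cond _ I (fun B : {set T} => #|B|)). Qed.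

Definition threshold_closed (A : {set T}) : Prop :=
  forall t, (forall z, z \in A -> t <= w z) \/
            (forall x, x \notin A -> t <= w x -> ~~ I (x |: superlevel w t A)).

Lemma myopic_reach_invariant (A : {set T}) :
  myopic_reach I f A -> I A /\ threshold_closed A.
Proof.
elim=> [|{}A a _ [IA IH] _ aA Ia amax].
  by split; [case: matroidI | move=> t; left => z; rewrite inE].
split => // t; have [heavy|closed] := IH t.
  (* All of A is heavy: either a is heavy too, or a is the first light
     element, and then no heavy element could have been added instead. *)
  have [ta|lt_a_t] := leP t (w a).
    by left => z; rewrite in_setU1 => /orP[/eqP->//|]; apply: heavy.
  right => x; rewrite in_setU1 negb_or => /andP[_ xA] tx; apply/negP => Ix.
  have sub : x |: A \subset x |: superlevel w t (a |: A).
    by apply: setUS; apply/subsetP => z zA; rewrite !inE zA orbT heavy.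
  by have := amax x xA (indep_subset sub Ix); rewrite leNgt (lt_le_trans lt_a_t tx).
(* The heavy part of A is already closed, so a is light and changes nothing. *)
have lt_a_t : w a < t.
  rewrite ltNge; apply/negP => ta; have := closed a aA ta; apply/negP/negPn.
  by apply: indep_subset Ia; apply: setUS; apply: superlevel_sub.
have -> : superlevel w t (a |: A) = superlevel w t A.
  apply/setP => z; rewrite !inE; have [->|//] := eqVneq z a.
  by rewrite (negbTE aA) leNgt lt_a_t.
by right => x; rewrite in_setU1 negb_or => /andP[_ xA]; apply: closed.
Qed.

Lemma myopic_output_dominates (Asol A : {set T}) :
  myopic_output I f Asol -> I A -> dominates w A Asol.
Proof.
move=> [reach full] IA t; have [IAsol closed] := myopic_reach_invariant reach.
case: (closed t) => [heavy|maximal].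
  (* Asol is a basis made only of heavy elements. *)
  have -> : superlevel w t Asol = Asol.
    by apply/setP => z; rewrite inE andb_idr //; apply: heavy.
  rewrite -leqNgt in full; apply: leq_trans full.
  exact: leq_trans (subset_leq_card (superlevel_sub w t A)) (indep_card_le_rank IA).
(* Otherwise a larger heavy part of A would extend the heavy part of Asol. *)
rewrite leqNgt; apply/negP => lt_sol_A.
have Isol := indep_subset (superlevel_sub w t Asol) IAsol.
have IA' := indep_subset (superlevel_sub w t A) IA.
have [x] := indep_exchange Isol IA' lt_sol_A.
rewrite !inE => /andP[xsol /andP[xA tx]] Ix.
have xNsol : x \notin Asol by apply: contra xsol => ->; rewrite tx.
by have := maximal x xNsol tx; rewrite Ix.
Qed.

End MyopicGreedy.

Section CurvatureBounds.
Variables (T : finType) (R : realFieldType) (f : {set T} -> R).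
Hypotheses (normf : normalized f) (monof : monotone f) (submodf : submodular f)
  (singleton_pos : forall x : T, 0 < f [set x]).

Local Notation kappa := (1 - curvature f).

Lemma kappaE :
  kappa = \big[Num.min/1]_(x : T) ((f setT - f (setT :\ x)) / f [set x]).
Proof. by rewrite /curvature opprB addrC subrK. Qed.

Lemma kappa_ge0 : 0 <= kappa.
Proof.
rewrite kappaE; apply/bigmin_geP; split => // x _.
by rewrite divr_ge0 ?subr_ge0 ?monof ?subsetT // ltW.
Qed.

Lemma kappa_marginal x : kappa * f [set x] <= f setT - f (setT :\ x).
Proof.
rewrite -ler_pdivlMr // kappaE; exact: bigmin_le.
Qed.

Lemma marginal_ge_top (S : {set T}) a : a \in S ->
  f setT - f (setT :\ a) <= f S - f (S :\ a).
Proof.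
move=> aS; have aNT : a \notin setT :\ a by rewrite !inE eqxx.
by have := submodf (setSD [set a] (subsetT S)) aNT; rewrite !setD1K ?inE.
Qed.

Lemma marginal_le_singleton (S : {set T}) a : a \in S ->
  f S - f (S :\ a) <= f [set a].
Proof.
move=> aS; have aNS : a \notin S :\ a by rewrite !inE eqxx.
by have := submodf (sub0set (S :\ a)) aNS; rewrite setD1K // setU0 normf subr0.
Qed.

Lemma curvature_lower_bound (S : {set T}) :
  kappa * \sum_(x in S) f [set x] <= f S.
Proof.
elim/setD1_ind: S => [|S a aS IH]; first by rewrite big_set0 mulr0 normf.
rewrite (big_setD1 a aS) mulrDr -(subrK (f (S :\ a)) (f S)).
exact: lerD (le_trans (kappa_marginal a) (marginal_ge_top aS)) IH.
Qed.

Lemma subadditive_singletons (S : {set T}) : f S <= \sum_(x in S) f [set x].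
Proof.
elim/setD1_ind: S => [|S a aS IH]; first by rewrite big_set0 normf.
rewrite (big_setD1 a aS) -(subrK (f (S :\ a)) (f S)).
exact: lerD (marginal_le_singleton aS) IH.
Qed.

End CurvatureBounds.

Section Resilience.
Variables (T : finType) (R : realFieldType) (f : {set T} -> R) (alpha : nat).

Lemma resil_value_le (A B : {set T}) : B \subset A -> (#|B| <= alpha)%N ->
  resil_value f alpha A <= f (A :\: B).
Proof. by move=> sBA cB; apply: bigmin_le_cond; rewrite sBA cB. Qed.

Lemma resil_value_ge (A : {set T}) (m : R) :
  (forall B : {set T}, B \subset A -> (#|B| <= alpha)%N -> m <= f (A :\: B)) ->
  m <= resil_value f alpha A.
Proof.
move=> lb; apply/bigmin_geP; split => [|B /andP[]]; last exact: lb.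
by have := lb set0 (sub0set A); rewrite cards0 setD0; apply.
Qed.

Lemma resil_opt_attained (I : {set T} -> bool) : I set0 ->
  exists2 A : {set T}, I A & resil_opt I f alpha = resil_value f alpha A.
Proof.
move=> I0; case: (arg_maxP (resil_value f alpha) I0) => A IA Amax.
exists A => //; apply/le_anti; rewrite le_bigmax_cond // andbT.
by apply/bigmax_leP; split => [|B /Amax //]; apply: Amax.
Qed.

End Resilience.

Lemma myopic_resilience_ratio (T : finType) (R : realFieldType)
  (I : {set T} -> bool) (f : {set T} -> R) (alpha : nat) (Asol A : {set T}) :
  is_matroid I -> normalized f -> monotone f -> submodular f ->
  (forall x : T, 0 < f [set x]) ->
  myopic_output I f Asol -> I A ->
  (1 - curvature f) * resil_value f alpha A <= resil_value f alpha Asol.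
Proof.
move=> matroidI normf monof submodf singleton_pos out IA.
apply: resil_value_ge => B sB cB.
have w_ge0 x : 0 <= f [set x] by apply: ltW.
have dom := myopic_output_dominates matroidI out IA.
have [B' sB' [cB' sum_le]] := dominates_removal B w_ge0 dom.
apply: le_trans _ (curvature_lower_bound normf submodf singleton_pos _).
apply: ler_wpM2l; first exact: kappa_ge0 monof singleton_pos.
apply: le_trans (resil_value_le f sB' (leq_trans cB' cB)) _.
exact: le_trans (subadditive_singletons normf submodf _) sum_le.
Qed.

Theorem mainTheorem1 (T : finType) (R : realFieldType)
  (I : {set T} -> bool) (f : {set T} -> R) (alpha : nat) (Asol : {set T}) :
  is_matroid I ->
  normalized f -> monotone f -> submodular f ->
  (forall x : T, 0 < f [set x]) ->
  myopic_output I f Asol ->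
  I Asol /\
  resil_value f alpha Asol >= (1 - curvature f) * resil_opt I f alpha.
Proof.
move=> matroidI normf monof submodf singleton_pos out.
have [IAsol _] := myopic_reach_invariant matroidI out.1.
have I0 : I set0 by case: matroidI.
have [A IA ->] := resil_opt_attained f alpha I0.
by split => //; exact: myopic_resilience_ratio matroidI normf monof submodf singleton_pos out IA.
Qed.
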